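(* A Hausdorff topological space $\langle X,\tau\rangle$ is a continuous open image of the Sorgenfrey line $\mathbb{S}$ (i.e. there is a continuous open surjection $\mathbb{S}\to\langle X,\tau\rangle$) if and only if there exists a Sorgenfrey base for $\langle X,\tau\rangle$.
   Context: The Sorgenfrey line $\mathbb{S}$ is $\mathbb{R}$ with the topology generated by $\{[a,b):a,b\in\mathbb{R}\}$. Notation: $\omega=\{0,1,2,\dots\}$, each $n\in\omega$ is identified with $\{0,\dots,n-1\}$; ${}^{<\omega}\omega$ is the set of finite sequences of naturals, ${}^\omega\omega$ the set of infinite ones; $\mathrm{lh}(s)$ is the length; $s\sqsubseteq t$ means $s=t\upharpoonright \mathrm{lh}(s)$, $s\sqsubset t$ means $s\sqsubseteq t$, $s\neq t$; $a^\frown k$ is $a$ extended by $k$. For $a,b\in{}^{<\omega}\omega\cup{}^\omega\omega$: $a\triangleleft b$ iff there is $n$ (in the domains of both) with $a\upharpoonright n=b\upharpoonright n$ and $a(n)<b(n)$; $a\trianglelefteq b$ iff $a\triangleleft b$ or $a=b$. A Souslin scheme on a set $X$ is a family $\mathbf V=\langle V_a\rangle_{a\in{}^{<\omega}\omega}$ of subsets of $X$. For $p\in{}^\omega\omega$, $\mathrm{fruit}(\mathbf V,p)=\bigcap_n V_{p\upharpoonright n}$. $\mathbf V$ is covering if $V_{\langle\rangle}=X$ and $V_a=\bigcup_n V_{a^\frown n}$ for all $a$; complete if $\mathrm{fruit}(\mathbf V,q)\ne\emptyset$ for all $q\in{}^\omega\omega$; open (on a space $\langle X,\tau\rangle$)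 if all $V_a\in\tau$. For $x\in X$, $q\in{}^\omega\omega$ is a branch of $x$ if $x\in\mathrm{fruit}(\mathbf V,q)$; $\mathrm{branches}(\mathbf V,x)$ is the set of branches of $x$. For $q\in{}^\omega\omega$, $n\in\omega$: $\mathrm{rsequences}(q,n)=\{p\in{}^\omega\omega: q\triangleleft p,\ q\upharpoonright n=p\upharpoonright n\}$ and $\mathrm{cut}(\mathbf V,q,n)=\bigcup\{\mathrm{fruit}(\mathbf V,p):p\in\mathrm{rsequences}(q,n)\}$. A branch $q$ of $x$ is a $\tau$-base branch of $x$ if $\{\mathrm{cut}(\mathbf V,q,m)\cup\{x\}:m\in\omega\}$ is an open neighborhood base at $x$ in $\langle X,\tau\rangle$; $\mathrm{BB}(\mathbf V,x,\tau)$ denotes the set of $\tau$-base branches of $x$. A Sorgenfrey base for a Hausdorff space $\langle X,\tau\rangle$ is an open complete covering Souslin scheme $\mathbf V$ on $\langle X,\tau\rangle$ such that (S1) for every $x\in X$, every $q\in\mathrm{branches}(\mathbf V,x)$ and every $n\in\omega$ there is $t\in\mathrm{BB}(\mathbf V,x,\tau)$ with $t\upharpoonright n=q\upharpoonright n$; and (S2) for every $q\in{}^\omega\omega$ there is $z\in X$ with $q\in\mathrm{BB}(\mathbf V,z,\tau)$. *)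

From HB Require Import structures.
From mathcomp Require Import all_boot all_order all_algebra.
From mathcomp Require Import all_classical all_reals all_analysis.
From mathcomp Require Import Rstruct Rstruct_topology.
Set Implicit Arguments. Unset Strict Implicit. Unset Printing Implicit Defensive.
Import Order.TTheory GRing.Theory Num.Theory.
Local Open Scope classical_set_scope.
Local Open Scope ring_scope.

Definition sorgenfrey_open (U : set Rdefinitions.R) : Prop :=
  forall x, U x -> exists b : Rdefinitions.R, x < b /\ [set y | x <= y < b] `<=` U.

(* Finite sequences of naturals: seq nat; infinite ones: nat -> nat.
   The restriction p|n is mkseq p n. *)
Definition restr (p : nat -> nat) (n : nat) : seq nat := mkseq p n.

Definition tri_lt (a b : nat -> nat) : Prop :=
  exists n, (forall i, (i < n)%N -> a i = b i) /\ (a n < b n)%N.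

Section Souslin.
Variable X : topologicalType.
Implicit Types (V : seq nat -> set X) (p q : nat -> nat) (x : X).

Definition fruit V p : set X := \bigcap_(n in [set: nat]) V (restr p n).

Definition covering_scheme V : Prop :=
  V [::] = [set: X] /\ forall a, V a = \bigcup_(n in [set: nat]) V (rcons a n).

Definition complete_scheme V : Prop := forall q, fruit V q !=set0.

Definition open_scheme V : Prop := forall a, open (V a).

Definition is_branch V x q : Prop := fruit V q x.

Definition rsequences q (n : nat) : set (nat -> nat) :=
  [set p | tri_lt q p /\ restr q n = restr p n].

Definition cut V q (n : nat) : set X :=
  \bigcup_(p in rsequences q n) fruit V p.

Definition base_branch V x q : Prop :=
  is_branch V x q /\
  (forall m, open (cut V q m `|` [set x])) /\
  (forall U, nbhs x U -> exists m, cut V q m `|` [set x] `<=` U).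

Definition sorgenfrey_base V : Prop :=
  [/\ open_scheme V, complete_scheme V, covering_scheme V,
      (forall x q n, is_branch V x q ->
         exists t, base_branch V x t /\ restr t n = restr q n)
    & (forall q, exists z, base_branch V z q)].

End Souslin.

Definition continuous_open_image_of_sorgenfrey (X : topologicalType) : Prop :=
  exists f : Rdefinitions.R -> X,
    [/\ (forall W : set X, open W -> sorgenfrey_open (f @^-1` W)),
        (forall U, sorgenfrey_open U -> open (f @` U))
      & forall y : X, exists x, f x = y].

From Pilot Require Import Defs.
From mathcomp Require Import all_boot all_order all_algebra all_classical all_reals all_analysis.
From mathcomp Require Import Rstruct Rstruct_topology lra.
Set Implicit Arguments. Unset Strict Implicit. Unset Printing Implicit Defensive.
Import Order.TTheory GRing.Theory Num.Theory.
Local Open Scope classical_set_scope.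
Local Open Scope ring_scope.

(* Both directions rest on an explicit coding [code : R -> (nat -> nat)] of
   the reals by infinite sequences: the first term encodes the integer part,
   and a real v in [0,1) is coded by the indices of the dyadic blocks
   [1 - 2^-n, 1 - 2^-(n+1)) successively containing v, zoom v, ... (zoom
   rescales a block onto [0,1)).  The reals whose code starts with a given
   finite sequence form a half-open interval; from this we get that [code]
   is onto, locally constant to the right, and, between reals with the same
   integer part, an order embedding into the lexicographic order.
   Consequently the sets [sorg_nbhd s m] = {s} U {u | code u lies in
   rsequences (code s) m} form a base of open neighbourhoods of s in S.

   Two bridge lemmas then do the work: a map f : S -> X is continuous and open
   iff the images f(sorg_nbhd s m) form open neighbourhood bases
   ([continuous_open_sorgenfreyP]), and, for a scheme V compatible with f,
   these images are exactly the sets cut V (code s) m U {f s}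
   ([image_sorg_nbhd]).  Given f we take V a = f(cylinder of a); given V we
   send r to the unique point with base branch code r. *)

Lemma restrP (p q : nat -> nat) m :
  restr p m = restr q m <-> (forall i, (i < m)%N -> p i = q i).
Proof.
split.
  by move=> E i lt_im; have := congr1 (nth 0%N ^~ i) E; rewrite !nth_mkseq.
move=> E; apply: (@eq_from_nth _ 0%N); first by rewrite !size_mkseq.
by move=> i; rewrite size_mkseq => lt_im; rewrite !nth_mkseq // E.
Qed.

Lemma restrS p k : restr p k.+1 = rcons (restr p k) (p k).
Proof. exact: mkseqS. Qed.

Lemma restr_shift p m : restr p m.+1 = p 0%N :: restr (fun i => p i.+1) m.
Proof.
apply: (@eq_from_nth _ 0%N); first by rewrite size_mkseq /= size_mkseq.
by move=> [|i]; rewrite size_mkseq => lt_im; rewrite nth_mkseq //= nth_mkseq.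
Qed.

Lemma rsequences_stable q p m : rsequences q m p ->
  exists k, forall p', restr p' k = restr p k -> rsequences q m p'.
Proof.
move=> [[k [agree lt_k]] /restrP eq_m].
have le_mk : (m <= k)%N.
  by rewrite leqNgt; apply/negP => /eq_m eq_k; move: lt_k; rewrite eq_k ltnn.
exists k.+1 => p' /restrP eq_k; split.
  by exists k; split=> [i lt_ik|]; rewrite eq_k // ?agree // ltnW.
by apply/restrP => i lt_im; rewrite eq_m // eq_k // ltnS (leq_trans (ltnW lt_im)).
Qed.

Lemma restr_le p q m k : (k <= m)%N -> restr p m = restr q m -> restr p k = restr q k.
Proof.
by move=> le_km /restrP agree; apply/restrP => i lt_ik; apply: agree (leq_trans lt_ik le_km).
Qed.

Lemma tri_lt_total p q : p <> q -> tri_lt p q \/ tri_lt q p.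
Proof.
move=> neq_pq; have ex_diff : exists i, p i != q i.
  apply: contrapT => none; apply: neq_pq; apply: funext => i.
  by apply/eqP; apply: contrapT => /negP diff_i; apply: none; exists i.
case: (ex_minnP ex_diff) => k /eqP diff_k min_k.
have agree i : (i < k)%N -> p i = q i.
  by move=> lt_ik; apply/eqP; apply: contraTT lt_ik => /min_k; rewrite -leqNgt.
case: (ltngtP (p k) (q k)) => [lt_k|gt_k|//]; [left|right]; exists k; split => //.
by move=> i /agree.
Qed.

Section DyadicBlocks.
Variable R : realType.
Implicit Types (v w : R) (n m : nat).

Definition dyad n : R := (2%:R ^+ n)^-1.

Lemma dyad_gt0 n : 0 < dyad n.
Proof. by rewrite /dyad invr_gt0 exprn_gt0. Qed.

Lemma dyad0 : dyad 0 = 1.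
Proof. by rewrite /dyad expr0 invr1. Qed.

Lemma dyadS n : dyad n.+1 = dyad n / 2.
Proof. by rewrite /dyad exprS invfM mulrC. Qed.

Lemma dyad_le n m : (n <= m)%N -> dyad m <= dyad n.
Proof.
elim: m => [|m IH]; first by rewrite leqn0 => /eqP ->.
rewrite leq_eqVlt => /orP [/eqP -> //|]; rewrite ltnS => /IH.
have := dyad_gt0 m; rewrite dyadS; lra.
Qed.

(* 2^-n becomes arbitrarily small (Archimedes, since n < 2^n). *)
Lemma dyad_small (eps : R) : 0 < eps -> exists k, dyad k < eps.
Proof.
move=> eps_gt0; have inv_ge0 : 0 <= eps^-1 by rewrite invr_ge0 ltW.
have := archi_boundP inv_ge0; set N := Num.Def.archi_bound _ => ltN.
exists N; rewrite /dyad -(invrK eps) ltf_pV2 ?posrE ?invr_gt0 ?exprn_gt0 //.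
by apply: lt_trans ltN _; rewrite -natrX ltr_nat ltn_expl.
Qed.

Lemma close_le v u : (forall m, u < v + dyad m) -> u <= v.
Proof.
move=> close; rewrite leNgt; apply/negP => lt_vu.
have [|m lt_m] := @dyad_small (u - v); first by lra.
by have := close m; lra.
Qed.

(* [0,1) is the disjoint union of the blocks [1 - 2^-n, 1 - 2^-(n+1)).
   [block v] is the index of the block containing v, [zoom v] is the
   position of v inside it rescaled affinely to [0,1), and [unzoom n]
   is the inverse rescaling of [0,1) onto block n. *)
Definition block v : nat :=
  match pselect (exists n, v < 1 - dyad n.+1) with
  | left ex_n => ex_minn ex_n
  | right _ => 0%N
  end.

Definition zoom v : R := (v - (1 - dyad (block v))) / dyad (block v).+1.

Definition unzoom n w : R := 1 - dyad n + w * dyad n.+1.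

Lemma block_bounds v : 0 <= v < 1 ->
  1 - dyad (block v) <= v < 1 - dyad (block v).+1.
Proof.
move=> /andP [v_ge0 v_lt1]; rewrite /block; case: pselect => [ex_n|[]]; last first.
  have [|k lt_k] := @dyad_small (1 - v); first by lra.
  by exists k; have := dyad_le (leqnSn k); lra.
case: ex_minnP => m lt_m min_m; rewrite lt_m andbT.
case: m lt_m min_m => [|k] lt_m min_m; first by rewrite dyad0; lra.
by rewrite leNgt; apply/negP => /min_m; rewrite ltnn.
Qed.

Lemma blockE v n : 1 - dyad n <= v < 1 - dyad n.+1 -> block v = n.
Proof.
move=> /andP [le_v lt_v]; rewrite /block; case: pselect => [ex_n|[]]; last by exists n.
case: ex_minnP => m lt_m min_m; apply/eqP; rewrite eqn_leq min_m //=.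
by rewrite leqNgt; apply/negP => /dyad_le; lra.
Qed.

Lemma unzoom_bounds n w : 0 <= w <= 1 -> 1 - dyad n <= unzoom n w <= 1 - dyad n.+1.
Proof.
move=> /andP [w_ge0 w_le1]; rewrite /unzoom.
have := dyad_gt0 n.+1; have := dyadS n => *.
have : 0 <= w * dyad n.+1 by rewrite mulr_ge0 // ltW // dyad_gt0.
have : w * dyad n.+1 <= dyad n.+1 by rewrite ler_piMl // ltW // dyad_gt0.
lra.
Qed.

Lemma unzoom_le n w w' : (unzoom n w <= unzoom n w') = (w <= w').
Proof. by rewrite /unzoom lerD2l ler_pM2r // dyad_gt0. Qed.

Lemma unzoom_lt n w w' : (unzoom n w < unzoom n w') = (w < w').
Proof. by rewrite /unzoom ltrD2l ltr_pM2r // dyad_gt0. Qed.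

Lemma unzoom1 n : unzoom n 1 = 1 - dyad n.+1.
Proof. by rewrite /unzoom mul1r dyadS; lra. Qed.

Lemma zoom_bounds v : 0 <= v < 1 -> 0 <= zoom v < 1.
Proof.
move=> v01; have := block_bounds v01; set n := block v => /andP [le_v lt_v].
have := dyad_gt0 n.+1; have := dyadS n => half pos.
rewrite /zoom -/n; apply/andP; split; first by apply: divr_ge0; lra.
by rewrite ltr_pdivrMr // mul1r; lra.
Qed.

Lemma zoomK v : 0 <= v < 1 -> unzoom (block v) (zoom v) = v.
Proof.
by move=> v01; rewrite /unzoom /zoom divfK ?gt_eqF ?dyad_gt0 //; lra.
Qed.

Lemma unzoom_in01 n w : 0 <= w <= 1 -> 0 <= unzoom n w <= 1.
Proof.
move=> w01; have /andP [lo hi] := unzoom_bounds n w01.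
have := dyad_le (leq0n n); have := dyad_gt0 n.+1; rewrite dyad0; lra.
Qed.

(* [embed a] maps [0,1) affinely onto the interval of all v whose code
   starts with the finite sequence a (see [code01_cyl] below). *)
Definition embed (a : seq nat) w : R := foldr unzoom w a.

Lemma embed_rcons a n w : embed (rcons a n) w = embed a (unzoom n w).
Proof. by rewrite /embed foldr_rcons. Qed.

Lemma embed_in01 a w : 0 <= w <= 1 -> 0 <= embed a w <= 1.
Proof. by move=> w01; elim: a => [|n a IH] //=; apply: unzoom_in01. Qed.

Lemma embed_le a w w' : w <= w' -> embed a w <= embed a w'.
Proof. by move=> le_ww'; elim: a => [|n a IH] //=; rewrite unzoom_le. Qed.

Lemma embed_lt a w w' : w < w' -> embed a w < embed a w'.
Proof. by move=> lt_ww'; elim: a => [|n a IH] //=; rewrite unzoom_lt. Qed.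

Lemma embed_width a : embed a 1 - embed a 0 <= dyad (size a).
Proof.
elim: a => [|n a IH] /=; first by rewrite dyad0; lra.
have w_ge0 : 0 <= embed a 1 - embed a 0 by rewrite subr_ge0 embed_le ?ler01.
have le_n : dyad n.+1 <= dyad 1 := dyad_le (ltn0Sn n).
have := ler_pM w_ge0 (ltW (dyad_gt0 n.+1)) IH le_n.
by rewrite /unzoom [dyad 1]dyadS [dyad (size a).+1]dyadS dyad0; lra.
Qed.

Definition code01 v (k : nat) : nat := block (iter k zoom v).

Lemma restr_code01 v m : restr (code01 v) m.+1 = block v :: restr (code01 (zoom v)) m.
Proof.
by rewrite restr_shift; congr (_ :: _); apply: eq_mkseq => i; rewrite /code01 iterSr.
Qed.

Lemma code01_cyl a v : embed a 0 <= v < embed a 1 -> restr (code01 v) (size a) = a.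
Proof.
elim: a v => [|n a IH] v //= /andP [le_v lt_v].
have lo : unzoom n 0 <= unzoom n (embed a 0).
  by rewrite unzoom_le; case/andP: (@embed_in01 a 0 (ltac:(by rewrite lexx ler01))).
have hi : unzoom n (embed a 1) <= unzoom n 1.
  by rewrite unzoom_le; case/andP: (@embed_in01 a 1 (ltac:(by rewrite lexx ler01))).
have block_v : block v = n.
  by apply: blockE; move: lo hi; rewrite unzoom1 {1}/unzoom mul0r addr0; lra.
have v01 : 0 <= v < 1.
  have := dyad_le (leq0n n); have := dyad_gt0 n.+1; rewrite dyad0.
  by move: lo hi; rewrite unzoom1 {1}/unzoom mul0r addr0; lra.
rewrite restr_code01 block_v IH // -(unzoom_le n) -(unzoom_lt n).
by rewrite -{2 3}block_v zoomK // le_v lt_v.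
Qed.

Lemma code01_in_cyl v m : 0 <= v < 1 ->
  embed (restr (code01 v) m) 0 <= v < embed (restr (code01 v) m) 1.
Proof.
elim: m v => [|m IH] v v01; first exact: v01.
rewrite restr_code01 /=.
have /andP [lo hi] := IH _ (zoom_bounds v01).
apply/andP; split; first by rewrite -[leRHS](zoomK v01) unzoom_le.
by rewrite -[ltLHS](zoomK v01) unzoom_lt.
Qed.

Lemma code01_close v u m : 0 <= v < 1 -> 0 <= u < 1 ->
  restr (code01 u) m = restr (code01 v) m -> u < v + dyad m.
Proof.
move=> v01 u01 eq_uv; have := embed_width (restr (code01 v) m).
have := code01_in_cyl m v01; have := code01_in_cyl m u01.
by rewrite eq_uv size_mkseq; lra.
Qed.

Lemma code01_reflect v u : 0 <= v < 1 -> 0 <= u < 1 ->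
  tri_lt (code01 v) (code01 u) -> v < u.
Proof.
move=> v01 u01 [k [agree lt_k]].
have eq_k : restr (code01 v) k = restr (code01 u) k by apply/restrP.
have /andP [_ v_lt] := code01_in_cyl k.+1 v01.
have /andP [u_ge _] := code01_in_cyl k.+1 u01.
rewrite !restrS embed_rcons in v_lt u_ge; rewrite embed_rcons -eq_k in u_ge.
apply: (lt_le_trans v_lt); apply: le_trans u_ge; apply: embed_le.
by rewrite unzoom1 /unzoom mul0r addr0 lerD2l lerN2 dyad_le.
Qed.

Lemma code01_inj v u : 0 <= v < 1 -> 0 <= u < 1 -> code01 v = code01 u -> v = u.
Proof.
move=> v01 u01 eq_vu; apply/eqP; rewrite eq_le.
by rewrite !close_le // => m; apply: code01_close; rewrite // eq_vu.
Qed.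

Lemma code01_mono v u : 0 <= v < 1 -> 0 <= u < 1 -> v < u -> tri_lt (code01 v) (code01 u).
Proof.
move=> v01 u01 lt_vu; have neq : code01 v <> code01 u.
  by move=> /(code01_inj v01 u01) eq_vu; move: lt_vu; rewrite eq_vu ltxx.
case: (tri_lt_total neq) => // /(code01_reflect u01 v01).
by move=> lt_uv; move: (lt_trans lt_vu lt_uv); rewrite ltxx.
Qed.

(* Every sequence is a code: take the supremum of the left end points of
   the nested intervals coded by its finite restrictions. *)
Lemma code01_surj p : exists2 v, 0 <= v < 1 & code01 v = p.
Proof.
pose left k := embed (restr p k) 0; pose right k := embed (restr p k) 1.
have left_incr : {homo left : n m / (n <= m)%N >-> n <= m}.
  apply/nondecreasing_seqP => k; rewrite /left restrS embed_rcons embed_le //.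
  by case/andP: (@unzoom_in01 (p k) 0 (ltac:(by rewrite lexx ler01))).
have right_decr : {homo right : n m / (n <= m)%N >-> m <= n}.
  apply/nonincreasing_seqP => k; rewrite /right restrS embed_rcons embed_le //.
  by case/andP: (@unzoom_in01 (p k) 1 (ltac:(by rewrite lexx ler01))).
have left_right k : left k < right k by apply: embed_lt; exact: ltr01.
have right_shrink k : right k.+1 < right k.
  rewrite /right restrS embed_rcons embed_lt // unzoom1.
  by have := dyad_gt0 (p k).+1; lra.
have ub m : ubound (range left) (right m.+1).
  move=> _ [k _ <-]; apply: le_trans (left_incr _ _ (leq_maxl k m.+1)) _.
  exact: le_trans (ltW (left_right _)) (right_decr _ _ (leq_maxr k m.+1)).
have in_cyl m : embed (restr p m) 0 <= sup (range left) < embed (restr p m) 1.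
  have ne : range left !=set0 by exists (left 0%N), 0%N.
  have sup_ex : has_sup (range left) by split; [|exists (right 1%N); apply: ub].
  apply/andP; split; first by apply: sup_upper_bound; last exists m.
  exact: le_lt_trans (ge_sup ne (ub m)) (right_shrink m).
exists (sup (range left)); first by have := in_cyl 0%N.
apply: funext => i; have := code01_cyl (in_cyl i.+1); rewrite size_mkseq.
by move/restrP; apply.
Qed.

End DyadicBlocks.

Definition nat_of_int (z : int) : nat :=
  match z with Posz n => n.*2 | Negz n => n.*2.+1 end.

Definition int_of_nat (k : nat) : int := if odd k then Negz k./2 else Posz k./2.

Lemma int_of_natK : cancel int_of_nat nat_of_int.
Proof.
move=> k; rewrite /int_of_nat; case E: (odd k) => /=;
by rewrite [in RHS](esym (odd_double_half k)) E ?add0n ?add1n.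
Qed.

Lemma nat_of_intK : cancel nat_of_int int_of_nat.
Proof. by case=> n; rewrite /int_of_nat /= ?odd_double ?doubleK //= uphalf_double. Qed.

Section RealCoding.
Variable R : realType.
Implicit Types (r u : R) (m : nat).

Definition frac r : R := r - (Num.floor r)%:~R.

Definition code r (k : nat) : nat :=
  if k is k'.+1 then code01 (frac r) k' else nat_of_int (Num.floor r).

Lemma frac_bounds r : 0 <= frac r < 1.
Proof. by have := floor_itv r; rewrite intrD /frac; lra. Qed.

Lemma restr_code r m : restr (code r) m.+1 = code r 0 :: restr (code01 (frac r)) m.
Proof. exact: restr_shift. Qed.

Lemma code0_floor r u : code u 0 = code r 0 -> Num.floor u = Num.floor r.
Proof. by move=> E; apply: (can_inj nat_of_intK). Qed.

Lemma frac_sub r u : Num.floor u = Num.floor r -> frac u - frac r = u - r.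
Proof. by move=> eq_f; rewrite /frac eq_f; lra. Qed.

Lemma code_right_const r m : exists2 b, r < b &
  forall u, r <= u < b -> restr (code u) m = restr (code r) m.
Proof.
suff [b lt_rb const] : exists2 b, r < b &
    forall u, r <= u < b -> restr (code u) m.+1 = restr (code r) m.+1.
  by exists b => // u /const; apply: restr_le.
pose a := restr (code01 (frac r)) m.
have /andP [lo hi] := code01_in_cyl m (frac_bounds r).
have /andP [_ le1] := @embed_in01 R a 1 (ltac:(by rewrite lexx ler01)).
exists (r + (embed a 1 - frac r)); first by rewrite -/a in hi; lra.
move=> u /andP [le_ru lt_u]; have := floor_itv r; rewrite intrD => fl_r.
have eq_f : Num.floor u = Num.floor r.
  by apply: floor_def; rewrite intrD; move: lt_u; rewrite /frac -/a; lra.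
rewrite !restr_code /code eq_f; congr (_ :: _).
have := @code01_cyl R a (frac u); rewrite size_mkseq; apply.
by have := frac_sub eq_f; rewrite -/a in lo hi; lra.
Qed.

Lemma code_close r u m : restr (code u) m.+1 = restr (code r) m.+1 -> u < r + dyad R m.
Proof.
rewrite !restr_code => -[/code0_floor eq_f eq_m].
have := code01_close (frac_bounds r) (frac_bounds u) eq_m.
by have := frac_sub eq_f; lra.
Qed.

Lemma code_reflect r u : code u 0 = code r 0 -> tri_lt (code r) (code u) -> r < u.
Proof.
move=> eq_0 [[|k] [agree lt_k]]; first by move: lt_k; rewrite eq_0 ltnn.
have lt_frac : frac r < frac u.
  apply: code01_reflect (frac_bounds r) (frac_bounds u) _.
  by exists k; split => // i lt_ik; apply: (agree i.+1).
by have := frac_sub (code0_floor eq_0); lra.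
Qed.

Lemma code_mono r u : code u 0 = code r 0 -> r < u -> tri_lt (code r) (code u).
Proof.
move=> eq_0 lt_ru; have eq_f := code0_floor eq_0.
have lt_frac : frac r < frac u by have := frac_sub eq_f; lra.
have [k [agree lt_k]] := code01_mono (frac_bounds r) (frac_bounds u) lt_frac.
by exists k.+1; split => // -[|i] lt_ik //=; apply: agree.
Qed.

Lemma code_surj p : exists r, code r = p.
Proof.
have [v v01 code_v] := code01_surj R (fun i => p i.+1).
pose z := int_of_nat (p 0%N).
have floor_zv : Num.floor (z%:~R + v) = z.
  by apply: floor_def; rewrite intrD; lra.
exists (z%:~R + v); apply: funext => -[|i] /=; first by rewrite floor_zv int_of_natK.
by rewrite /frac floor_zv addrC addKr code_v.
Qed.

End RealCoding.

Local Notation R := Rdefinitions.R.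

Definition sorg_nbhd (s : R) (m : nat) : set R :=
  [set u | u = s \/ rsequences (code s) m (code u)].

Lemma sorg_nbhd_open s m : sorgenfrey_open (sorg_nbhd s m).
Proof.
move=> x [->|rs_x]; last first.
  have [k stable] := rsequences_stable rs_x.
  have [b lt_xb const] := code_right_const x k.
  by exists b; split => // w w_in; right; apply/stable/const.
have [b lt_sb const] := code_right_const s m.+1; exists b; split => // w w_in.
have /andP [le_sw _] := w_in; have eq_w := const w w_in.
have eq_0 : code w 0 = code s 0 by move/restrP: eq_w; apply.
have [-> | neq_ws] := eqVneq w s; [by left | right; split].
  by apply: code_mono eq_0 _; rewrite lt_neqAle eq_sym neq_ws.
exact/esym/(restr_le (leqnSn m)).
Qed.

Lemma sorg_nbhd_small s (eps : R) : 0 < eps ->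
  exists m, sorg_nbhd s m `<=` [set u | s <= u < s + eps].
Proof.
move=> eps_gt0; have [k lt_k] := dyad_small eps_gt0.
exists k.+1 => u [->|[lt_su eq_su]] /=; first by rewrite lexx /=; lra.
have lt_s := code_reflect (esym (congr1 (nth 0%N ^~ 0%N) eq_su)) lt_su.
by have := code_close (esym eq_su); lra.
Qed.

Definition open_local_base (X : topologicalType) (x : X) (B : nat -> set X) : Prop :=
  (forall m, open (B m)) /\ (forall U, nbhs x U -> exists m, B m `<=` U).

Lemma continuous_open_sorgenfreyP (X : topologicalType) (f : R -> X) :
  (forall W, open W -> sorgenfrey_open (f @^-1` W)) /\
  (forall U, sorgenfrey_open U -> open (f @` U)) <->
  forall s, open_local_base (f s) (fun m => f @` sorg_nbhd s m).
Proof.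
split=> [[f_cont f_open] s | base]; first split.
- by move=> m; apply/f_open/sorg_nbhd_open.
- move=> U; rewrite nbhsE => -[W [oW W_fs] WU].
  have [b [lt_sb sW]] := f_cont W oW s W_fs.
  have [|m small] := @sorg_nbhd_small s (b - s); first by lra.
  exists m => _ [u /small /andP [le_su lt_u] <-]; apply/WU/sW.
  by rewrite /= le_su; lra.
split=> [W oW s W_fs | U oU].
  have [_ /(_ W (open_nbhs_nbhs (conj oW W_fs))) [m sub_W]] := base s.
  have [b [lt_sb sub_m]] := sorg_nbhd_open (or_introl (erefl s) : sorg_nbhd s m s).
  by exists b; split => // u /sub_m u_in; apply: sub_W; exists u.
rewrite openE => _ [s U_s <-].
have [b [lt_sb sub_U]] := oU s U_s.
have [|m small] := @sorg_nbhd_small s (b - s); first by lra.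
have [open_m _] := base s.
rewrite /interior nbhsE; exists (f @` sorg_nbhd s m); first by split; [|exists s; [left|]].
move=> _ [u /small /andP [le_su lt_u] <-]; exists u => //; apply: sub_U.
by rewrite /= le_su; lra.
Qed.

(* Both directions of the theorem compare a scheme V with a map f that sends
   each real u into the fruit of its code, and such that every point of a
   fruit is the image of reals whose codes follow the branch arbitrarily far. *)
Section SchemeImage.
Variables (X : topologicalType) (V : seq nat -> set X) (f : R -> X).
Hypothesis fruit_code : forall u, fruit V (code u) (f u).
Hypothesis fruit_lift : forall p y n, fruit V p y ->
  exists2 u, f u = y & restr (code u) n = restr p n.

Lemma image_sorg_nbhd s m : f @` sorg_nbhd s m = Defs.cut V (code s) m `|` [set f s].
Proof.
apply/seteqP; split => y.
  by move=> [u [-> | rs_u] <-]; [right | left; exists (code u)].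
move=> [[p rs_p p_y] | ->]; last by exists s => //; left.
have [k stable] := rsequences_stable rs_p.
have [u <- eq_u] := fruit_lift k p_y.
by exists u => //; right; apply: stable.
Qed.

Lemma base_branch_codeP s :
  base_branch V (f s) (code s) <-> open_local_base (f s) (fun m => f @` sorg_nbhd s m).
Proof.
have -> : (fun m => f @` sorg_nbhd s m) = (fun m => Defs.cut V (code s) m `|` [set f s]).
  by apply: funext => m; apply: image_sorg_nbhd.
by split=> [[] | ] //; split => //; apply: fruit_code.
Qed.

End SchemeImage.

Section BaseOfMap.
Variables (X : topologicalType) (f : R -> X).
Hypothesis f_cont : forall W : set X, open W -> sorgenfrey_open (f @^-1` W).
Hypothesis f_open : forall U, sorgenfrey_open U -> open (f @` U).
Hypothesis f_surj : forall y : X, exists x, f x = y.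

Definition cyl (a : seq nat) : set R := [set r | restr (code r) (size a) = a].

Definition image_scheme (a : seq nat) : set X := f @` cyl a.

Lemma cyl_open a : sorgenfrey_open (cyl a).
Proof.
move=> u cyl_u; have [b lt_ub const] := code_right_const u (size a).
by exists b; split => // w /const; rewrite /cyl /= => ->.
Qed.

Lemma image_fruit_code u : fruit image_scheme (code u) (f u).
Proof. by move=> n _; exists u; rewrite // /cyl /= size_mkseq. Qed.

Lemma image_fruit_lift p y n : fruit image_scheme p y ->
  exists2 u, f u = y & restr (code u) n = restr p n.
Proof. by move=> /(_ n I) [u cyl_u <-]; exists u; move: cyl_u; rewrite /cyl /= size_mkseq. Qed.

Lemma image_base_branch s : base_branch image_scheme (f s) (code s).
Proof.
apply/(base_branch_codeP image_fruit_code image_fruit_lift).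
exact: (proj1 (continuous_open_sorgenfreyP f) (conj f_cont f_open) s).
Qed.

Lemma image_scheme_covering : covering_scheme image_scheme.
Proof.
split; first by apply/seteqP; split => // y _; have [x <-] := f_surj y; exists x.
move=> a; apply/seteqP; split => y.
  move=> [r cyl_r <-]; exists (code r (size a)) => //; exists r => //.
  by rewrite /cyl /= size_rcons restrS cyl_r.
move=> [n _ [r cyl_r <-]]; exists r => //.
by move: cyl_r; rewrite /cyl /= size_rcons restrS => /rcons_inj [].
Qed.

Lemma image_sorgenfrey_base : sorgenfrey_base image_scheme.
Proof.
split.
- by move=> a; apply/f_open/cyl_open.
- by move=> q; have [r <-] := code_surj R q; exists (f r); apply: image_fruit_code.
- exact: image_scheme_covering.
- move=> x q n /(image_fruit_lift n) [u <- eq_n].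
  by exists (code u); split => //; apply: image_base_branch.
- by move=> q; have [r <-] := code_surj R q; exists (f r); apply: image_base_branch.
Qed.

End BaseOfMap.

(* From a Sorgenfrey base V to a continuous open surjection: a real r is
   sent to the (unique, by Hausdorffness) point having the code of r as a
   base branch. *)
Section MapOfBase.
Variables (X : topologicalType) (V : seq nat -> set X).
Hypothesis hX : hausdorff_space X.
Hypothesis V_complete : complete_scheme V.
Hypothesis V_covering : covering_scheme V.
Hypothesis V_branch_base : forall x q n, is_branch V x q ->
  exists t, base_branch V x t /\ restr t n = restr q n.
Hypothesis V_base_point : forall q, exists z, base_branch V z q.

Lemma cut_antitone q m1 m2 : (m1 <= m2)%N -> Defs.cut V q m2 `<=` Defs.cut V q m1.
Proof. by move=> le_m y [p [lt_qp eq_qp] p_y]; exists p => //; split => //; apply: restr_le eq_qp. Qed.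

(* Completeness makes every cut non-empty: bump the m-th term of q. *)
Lemma cut_nonempty q m : Defs.cut V q m !=set0.
Proof.
pose p i := if i == m then (q m).+1 else q i.
have [y p_y] := V_complete p; exists y, p => //; split.
  by exists m; split=> [i lt_im|]; rewrite /p ?eqxx // (ltn_eqF lt_im).
by apply/restrP => i lt_im; rewrite /p (ltn_eqF lt_im).
Qed.

Lemma base_branch_unique z z' q : base_branch V z q -> base_branch V z' q -> z = z'.
Proof.
move=> [_ [_ near_z]] [_ [_ near_z']]; apply: hX => A B A_z B_z'.
have [m1 sub_A] := near_z _ A_z; have [m2 sub_B] := near_z' _ B_z'.
have [y y_cut] := cut_nonempty q (maxn m1 m2).
exists y; split; [apply: sub_A | apply: sub_B]; left.
  exact: cut_antitone (leq_maxl m1 m2) _ y_cut.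
exact: cut_antitone (leq_maxr m1 m2) _ y_cut.
Qed.

Lemma branch_exists x : exists q, is_branch V x q.
Proof.
have [V_top V_cov] := V_covering.
have [next next_in] : {next : seq nat -> nat & forall a, V a x -> V (rcons a (next a)) x}.
  apply: (@choice _ _ (fun a n => V a x -> V (rcons a n) x)) => a; have [a_x | not_a_x] := pselect (V a x); last by exists 0%N.
  by move: a_x; rewrite V_cov => -[n _ n_x]; exists n.
pose pref k := iter k (fun a => rcons a (next a)) [::].
have pref_x k : V (pref k) x by elim: k => [|k IH] /=; [rewrite V_top | apply: next_in].
have restr_pref k : restr (fun i => next (pref i)) k = pref k.
  by elim: k => [//|k IH]; rewrite restrS IH.
by exists (fun i => next (pref i)) => n _; rewrite restr_pref.
Qed.

Definition base_point (q : nat -> nat) : X := projT1 (cid (V_base_point q)).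

Lemma base_pointP q : base_branch V (base_point q) q.
Proof. by rewrite /base_point; case: cid. Qed.

Definition scheme_map (r : R) : X := base_point (code r).

Lemma scheme_fruit_code u : fruit V (code u) (scheme_map u).
Proof. by case: (base_pointP (code u)). Qed.

Lemma scheme_fruit_lift p y n : fruit V p y ->
  exists2 u, scheme_map u = y & restr (code u) n = restr p n.
Proof.
move=> p_y; have [t [t_base eq_n]] := V_branch_base n p_y.
have [u code_u] := code_surj R t; exists u; last by rewrite code_u.
by rewrite /scheme_map code_u; apply: base_branch_unique (base_pointP t) t_base.
Qed.

Lemma scheme_map_image : continuous_open_image_of_sorgenfrey X.
Proof.
have [map_cont map_open] : (forall W, open W -> sorgenfrey_open (scheme_map @^-1` W)) /\
    (forall U, sorgenfrey_open U -> open (scheme_map @` U)).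
  apply/(continuous_open_sorgenfreyP scheme_map) => s.
  exact/(base_branch_codeP scheme_fruit_code scheme_fruit_lift)/base_pointP.
exists scheme_map; split => // x; have [q q_x] := branch_exists x.
by have [u <- _] := scheme_fruit_lift 0%N q_x; exists u.
Qed.

End MapOfBase.

Theorem theorem1 (X : topologicalType) (hX : hausdorff_space X) :
  continuous_open_image_of_sorgenfrey X <->
  exists V : seq nat -> set X, sorgenfrey_base V.
Proof.
split=> [[f [f_cont f_open f_surj]] | [V [_ V_complete V_covering S1 S2]]].
  by exists (image_scheme f); apply: image_sorgenfrey_base.
exact: (scheme_map_image hX V_complete V_covering S1 S2).
Qed.
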